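(* Let $\mathcal{C}$ be a nonempty chordal $d$-uniform clutter on $[n]$ with multiset $\{N_1,\ldots,N_r\}$, let $N=\max\{N_1,\ldots,N_r\}$, and let $\Delta=\Delta(\mathcal{C})$ be its clique complex, with $\mathbf{h}$-vector $(h_i)$. Then \[ \sum_{i\ge0}h_it^i=\sum_{i=0}^{d-1}\binom{n}{i}t^i(1-t)^{N+d-i-1}+t^{d-1}\sum_{i=1}^r\Big((1-t)^{N-N_i}-(1-t)^{N}\Big). \]
   Context: A $d$-uniform clutter $\mathcal{C}$ on $[n]$ is a set of $d$-subsets of $[n]$. A $(d-1)$-subset $e$ is a submaximal circuit if $e\subset F$ for some $F\in\mathcal{C}$; $V\subseteq[n]$ is a clique if all $d$-subsets of $V$ lie in $\mathcal{C}$ (sets with fewer than $d$ elements are cliques); the clique complex $\Delta(\mathcal{C})$ consists of all cliques. $\mathrm{N}_{\mathcal{C}}(e)=\{c: e\cup\{c\}\in\mathcal{C}\}$, $\mathrm{N}_{\mathcal{C}}[e]=e\cup\mathrm{N}_{\mathcal{C}}(e)$; $e$ is simplicial if it is a submaximal circuit and $\mathrm{N}_{\mathcal{C}}[e]$ is a clique. $\mathcal{C}\setminus e=\{F\in\mathcal{C}:e\not\subset F\}$, and $\mathcal{C}_{e_1\cdots e_i}$ is successive deletion. A simplicial order is a sequence $e_1,\ldots,e_r$ with $e_i$ simplicial in $\mathcal{C}_{e_1\cdots e_{i-1}}$ (in $\mathcal{C}$ for $i=1$) and $\mathcal{C}_{e_1\cdots e_r}=\emptyset$; $\mathcal{C}$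 is chordal if one exists. The multiset of $\mathcal{C}$ is $\{N_1,\ldots,N_r\}$ with $N_i=|\mathrm{N}_{\mathcal{C}_{e_1\cdots e_{i-1}}}(e_i)|$ for a simplicial order (it does not depend on the order chosen). For a simplicial complex $\Delta$ on $[n]$ and a field $K$, the Stanley–Reisner ring $K[\Delta]=K[x_1,\ldots,x_n]/I_\Delta$, $I_\Delta=(\prod_{j\in F}x_j: F\notin\Delta)$, has Hilbert series $Q(t)/(1-t)^{\delta}$ with $\delta=\dim K[\Delta]$ and $Q(t)=\sum_{i=0}^{\delta}h_it^i$; $(h_0,\ldots,h_\delta)$ is the $\mathbf{h}$-vector of $\Delta$. *)

From mathcomp Require Import all_boot all_order all_algebra.
Set Implicit Arguments. Unset Strict Implicit. Unset Printing Implicit Defensive.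
Import GRing.Theory Num.Theory.

Section Clutter.
Variables (n d : nat).
Implicit Types (C : {set {set 'I_n}}) (e V : {set 'I_n}).

Definition uniform C : bool := [forall F in C, #|F| == d].

Definition is_clique C V : bool :=
  [forall F : {set 'I_n}, ((F \subset V) && (#|F| == d)) ==> (F \in C)].

Definition clique_complex C : {set {set 'I_n}} := [set V | is_clique C V].

Definition submax C e : bool :=
  (#|e| == d.-1) && [exists F in C, e \proper F].

Definition nbr C e : {set 'I_n} := [set c | (c |: e) \in C].
Definition cnbr C e : {set 'I_n} := e :|: nbr C e.

Definition simplicial C e : bool := submax C e && is_clique C (cnbr C e).

Definition cdelete C e : {set {set 'I_n}} := [set F in C | ~~ (e \subset F)].

Fixpoint simp_order C (es : seq {set 'I_n}) : bool :=
  match es with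
  | [::] => C == set0
  | e :: es' => simplicial C e && simp_order (cdelete C e) es'
  end.

Definition chordal C : Prop := exists es, simp_order C es.

Fixpoint mult_seq C (es : seq {set 'I_n}) : seq nat :=
  match es with
  | [::] => [::]
  | e :: es' => #|nbr C e| :: mult_seq (cdelete C e) es'
  end.
End Clutter.

Section StanleyReisner.
Variable n : nat.
Implicit Types (D : {set {set 'I_n}}).

(* Hilbert function of K[D]: K-dimension of the degree-k component, i.e. the
   number of monomials x^a of degree k whose support {j | a j != 0} is a face
   of D (standard monomial basis of the Stanley-Reisner ring; independent
   of the field K). *)
Definition sr_hilb D (k : nat) : nat :=
  #|[set a : {ffun 'I_n -> 'I_k.+1} |
       ((\sum_j (a j : nat)) == k) && ([set j | (a j : nat) != 0%N] \in D)]|.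

(* delta = dim K[D] = max cardinality of a face *)
Definition sr_dim D : nat := \max_(F in D) #|F|.

(* h-vector: coefficients of Q(t) = HS(t) * (1-t)^delta *)
Definition hvec D (i : nat) : int :=
  (\sum_(j < i.+1) (-1) ^+ j * ('C(sr_dim D, j))%:Z * (sr_hilb D (i - j))%:Z)%R.
End StanleyReisner.

From mathcomp Require Import all_boot all_order all_algebra.
From mathcomp Require Import ring zify.
Set Implicit Arguments. Unset Strict Implicit. Unset Printing Implicit Defensive.
Import GRing.Theory.

(** Since the Hilbert series of the Stanley-Reisner ring is the sum over faces F
    of (t/(1-t))^|F|, the h-polynomial of a complex of dimension delta is the sum
    of t^|F| (1-t)^(delta-|F|) over its faces.  In the clique complex every set
    with fewer than d elements is a face; this gives the first sum.  Removing a
    simplicial submaximal circuit e splits the remaining faces into the cliques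
    of C \ e and the sets e ∪ S with S a nonempty subset of N(e), so along a
    simplicial order there are sum_i C(N_i, m) faces with m + d - 1 elements.
    Hence delta = N + d - 1, and the binomial theorem
    sum_(m>=1) C(N_i, m) t^m (1-t)^(N_i-m) = 1 - (1-t)^N_i turns the large faces
    into the second sum. *)

Lemma exists_subset_card (T : finType) (V : {set T}) k :
  (k <= #|V|)%N -> exists2 F : {set T}, F \subset V & #|F| = k.
Proof.
move=> kV; have : (0 < #|[set A : {set T} | A \subset V & #|A| == k]|)%N.
  by rewrite cards_draws bin_gt0.
by case/card_gt0P => F; rewrite inE => /andP [FV /eqP Fk]; exists F.
Qed.

Lemma bigmax_seq_mem (r : seq nat) : r != [::] -> (\max_(x <- r) x \in r)%N.
Proof.
elim: r => // x r IH _; rewrite big_cons inE.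
case: (r =P [::]) => [->|/eqP /IH r_max]; first by rewrite big_nil maxn0 eqxx.
by rewrite /maxn; case: ltnP => _; rewrite ?r_max ?orbT ?eqxx.
Qed.

Lemma sum_set_card_lt (R : nmodType) (T : finType) d (g : nat -> R) : (0 < d)%N ->
  (\sum_(F : {set T} | (#|F| < d)%N) g #|F| = \sum_(k < d) g k *+ 'C(#|T|, k))%R.
Proof.
case: d => // d _.
rewrite (partition_big (fun F : {set T} => (inord #|F| : 'I_d.+1)) xpredT) //=.
apply: eq_bigr => k _.
rewrite (eq_bigl (fun F => F \in [set F : {set T} | #|F| == k])); last first.
  move=> F; rewrite inE; apply/idP/idP.
    by case/andP => Fd /eqP <-; rewrite inordK.
  move=> /eqP Fk; rewrite Fk ltn_ord /=; apply/eqP/val_inj; rewrite /= inordK //.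
rewrite (eq_bigr (fun _ => g k)); last by move=> F; rewrite inE => /eqP ->.
by rewrite sumr_const card_draws.
Qed.

Lemma sum_nonempty_subsets (R : nmodType) (T : finType) (f : nat -> R) (A : {set T}) :
  (\sum_(S : {set T} | (S \subset A) && (S != set0)) f #|S| =
   \sum_(m < #|A|.+1 | (0 < m)%N) f m *+ 'C(#|A|, m))%R.
Proof.
rewrite (partition_big (fun S : {set T} => (inord #|S| : 'I_#|A|.+1))
                       (fun m : 'I_#|A|.+1 => (0 < m)%N)) /=; last first.
  by move=> S /andP [SA S0]; rewrite inordK ?card_gt0 // ltnS subset_leq_card.
apply: eq_bigr => m m0.
rewrite (eq_bigl (fun S => S \in [set S : {set T} | S \subset A & #|S| == m])); last first.
  move=> S; rewrite inE; apply/idP/idP.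
    case/andP => /andP [SA _] /eqP <-.
    by rewrite SA inordK ?eqxx // ltnS subset_leq_card.
  case/andP => SA /eqP Sm; rewrite SA -card_gt0 Sm m0 /=.
  by apply/eqP/val_inj; rewrite /= inordK // Sm.
rewrite (eq_bigr (fun _ => f m)); last by move=> S; rewrite inE => /andP [_ /eqP ->].
by rewrite sumr_const cards_draws.
Qed.

Section Cliques.
Variables (n d : nat).
Implicit Types (C : {set {set 'I_n}}) (e V W S : {set 'I_n}).

Lemma is_cliqueP C V :
  reflect (forall F : {set 'I_n}, F \subset V -> #|F| = d -> F \in C) (is_clique d C V).
Proof.
apply: (iffP forallP) => [cl F FV Fd | cl F]; first by move: (cl F); rewrite FV Fd eqxx.
by apply/implyP => /andP [FV /eqP Fd]; apply: cl.
Qed.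

Lemma is_cliqueS C V W : V \subset W -> is_clique d C W -> is_clique d C V.
Proof.
move=> VW /is_cliqueP cl; apply/is_cliqueP => F FV; apply: cl.
exact: subset_trans FV VW.
Qed.

Lemma is_clique_small C V : (#|V| < d)%N -> is_clique d C V.
Proof.
move=> Vd; apply/is_cliqueP => F FV Fd.
by move: (subset_leq_card FV); rewrite Fd leqNgt Vd.
Qed.

Lemma cdelete_subset C e : cdelete C e \subset C.
Proof. by apply/subsetP => F; rewrite inE => /andP []. Qed.

Lemma uniformS C C' : C' \subset C -> uniform d C -> uniform d C'.
Proof.
move=> C'C /forallP uC; apply/forallP => F; apply/implyP => FC'.
by move/implyP: (uC F); apply; apply: (subsetP C'C).
Qed.

Hypothesis d_gt0 : (0 < d)%N.

Lemma nbr_disjoint C e : uniform d C -> #|e| = d.-1 -> [disjoint nbr C e & e].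
Proof.
move=> /forallP uC ed; rewrite disjoint_subset; apply/subsetP => c; rewrite !inE => ceC.
by move/implyP/(_ ceC)/eqP: (uC (c |: e)); rewrite cardsU1 ed; case: (c \in e) => /=; lia.
Qed.

Lemma card_setU_nbr C e S : uniform d C -> #|e| = d.-1 ->
  S \subset nbr C e -> #|e :|: S| = (#|S| + d.-1)%N.
Proof.
move=> uC ed SN; rewrite cardsU ed addnC disjoint_setI0 ?cards0 ?subn0 //.
by rewrite disjoint_sym (disjointWl SN) ?nbr_disjoint.
Qed.

Lemma is_clique_cdelete C e V : #|e| = d.-1 -> (d <= #|V|)%N ->
  is_clique d (cdelete C e) V = is_clique d C V && ~~ (e \subset V).
Proof.
move=> ed dV; apply/idP/andP => [cl | [/is_cliqueP cl eV]].
  split.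
    apply/is_cliqueP => F FV Fd.
    exact/(subsetP (cdelete_subset C e))/(is_cliqueP _ _ cl).
  apply/negP => eV.
  have /properP [_ [c cV ce]] : e \proper V by rewrite properEcard eV ed (leq_trans _ dV) ?prednK.
  have : c |: e \in cdelete C e.
    by apply: (is_cliqueP _ _ cl); rewrite ?subUset ?sub1set ?cV ?eV // cardsU1 ce ed; lia.
  by rewrite inE subsetUr andbF.
apply/is_cliqueP => F FV Fd; rewrite inE cl //=.
by apply: contra eV => eF; apply: subset_trans FV.
Qed.

Lemma is_clique_setU_simplicial C e S : uniform d C -> simplicial d C e ->
  [disjoint S & e] ->
  is_clique d C (e :|: S) && (d <= #|e :|: S|)%N = (S \subset nbr C e) && (S != set0).
Proof.
move=> uC /andP [/andP [/eqP ed _] cl_nbr] Se.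
apply/andP/andP => [[cl dS] | [SN S0]].
  split.
    apply/subsetP => c cS; rewrite inE; apply: (is_cliqueP _ _ cl).
      by rewrite setUC setUS // sub1set.
    by rewrite cardsU1 ed (disjointFr Se cS); lia.
  by apply: contraTneq dS => ->; rewrite setU0 ed -ltnNge; lia.
split; first by apply: is_cliqueS cl_nbr; rewrite /cnbr setUS.
by rewrite (card_setU_nbr uC ed SN); move: S0; rewrite -card_gt0; lia.
Qed.

Lemma sum_cliques_containing (R : nmodType) (w : nat -> R) C e :
  uniform d C -> simplicial d C e ->
  (\sum_(V | is_clique d C V && (d <= #|V|)%N && (e \subset V)) w #|V| =
   \sum_(m < #|nbr C e|.+1 | (0 < m)%N) w (m + d.-1)%N *+ 'C(#|nbr C e|, m))%R.
Proof.
move=> uC simp_e; have ed : #|e| = d.-1 by case/andP: simp_e => /andP [/eqP].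
rewrite -(sum_nonempty_subsets (fun k => w (k + d.-1)%N) (nbr C e)).
rewrite (reindex_onto (fun S => e :|: S) (fun V => V :\: e)) /=; last first.
  by move=> V /andP [_ eV]; rewrite -[RHS](setID V e) (setIidPr eV).
have cliqueE S : is_clique d C (e :|: S) && (d <= #|e :|: S|)%N && (e \subset e :|: S)
    && ((e :|: S) :\: e == S) = (S \subset nbr C e) && (S != set0).
  rewrite subsetUl andbT setDUl setDv set0U; apply/idP/idP.
    by case/andP=> cl /eqP/setDidPl Se; rewrite -is_clique_setU_simplicial.
  case/andP=> SN S0; have Se : [disjoint S & e] by apply: disjointWl SN (nbr_disjoint uC ed).
  by rewrite is_clique_setU_simplicial // SN S0; apply/eqP/setDidPl.
apply: eq_big => [// | S]; rewrite cliqueE => /andP [SN _].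
by rewrite (card_setU_nbr uC ed SN).
Qed.

Lemma sum_cliques (R : nmodType) (w : nat -> R) C es :
  uniform d C -> simp_order d C es ->
  (\sum_(V | is_clique d C V && (d <= #|V|)%N) w #|V| =
   \sum_(Ni <- mult_seq C es) \sum_(m < Ni.+1 | (0 < m)%N) w (m + d.-1)%N *+ 'C(Ni, m))%R.
Proof.
elim: es C => [|e es IH] C uC /=.
  move/eqP => ->; rewrite big_nil big1 // => V /andP [/is_cliqueP cl dV].
  by have [F FV Fd] := exists_subset_card dV; move: (cl F FV Fd); rewrite inE.
case/andP=> simp_e so; have ed : #|e| = d.-1 by case/andP: simp_e => /andP [/eqP].
rewrite big_cons (bigID (fun V => e \subset V)) /= sum_cliques_containing //.
rewrite -IH ?(uniformS (cdelete_subset C e)) //; congr (_ + _)%R.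
apply: eq_bigl => V; case: (leqP d #|V|) => dV; rewrite ?andbF ?andFb //.
by rewrite !andbT is_clique_cdelete.
Qed.

Lemma size_mult_seq C es : size (mult_seq C es) = size es.
Proof. by elim: es C => //= e es IH C; rewrite IH. Qed.

Lemma card_nbr_gt0 C e : uniform d C -> simplicial d C e -> (0 < #|nbr C e|)%N.
Proof.
move=> /forallP uC /andP [/andP [/eqP ed /existsP [F /andP [FC /properP [eF [c cF ce]]]]] _].
apply/card_gt0P; exists c; rewrite inE.
suff -> : c |: e = F by [].
move/implyP/(_ FC)/eqP: (uC F) => Fd.
by apply/eqP; rewrite eqEcard subUset sub1set cF eF cardsU1 ce ed Fd; lia.
Qed.

Lemma mult_seq_gt0 C es : uniform d C -> simp_order d C es ->
  all (fun Ni => 0 < Ni)%N (mult_seq C es).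
Proof.
elim: es C => [|e es IH] C uC //= /andP [simp_e so].
by rewrite card_nbr_gt0 // IH // (uniformS (cdelete_subset C e)).
Qed.

End Cliques.

Section CliqueDimension.
Variables (n d : nat) (C : {set {set 'I_n}}) (es : seq {set 'I_n}).
Hypotheses (d_gt0 : (0 < d)%N) (uC : uniform d C) (so : simp_order d C es).
Local Notation Ns := (mult_seq C es).
Local Notation N := (\max_(Ni <- mult_seq C es) Ni)%N.

Lemma mult_seq_le_max Ni : Ni \in Ns -> (Ni <= N)%N.
Proof. by move=> NiNs; apply: (@leq_bigmax_seq _ _ xpredT id). Qed.

Lemma card_cliques_of_size k : (d <= k)%N ->
  #|[set V | is_clique d C V & #|V| == k]| = (\sum_(Ni <- Ns) 'C(Ni, k - d.-1))%N.
Proof.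
move=> dk; have := sum_cliques d_gt0 (fun s => (s == k : nat)) uC so.
have -> : (\sum_(V | is_clique d C V && (d <= #|V|)%N) (#|V| == k : nat))%R =
    #|[set V | is_clique d C V & #|V| == k]|.
  rewrite -sum1_card [LHS]big_mkcond [RHS]big_mkcond; apply: eq_bigr => V _.
  rewrite inE; case: (boolP (#|V| == k)) => [/eqP ->|_]; rewrite ?dk ?andbT ?andbF;
    by case: (is_clique d C V); case: (d <= #|V|).
move=> ->; apply: eq_bigr => Ni _; set j := (k - d.-1)%N.
have j_gt0 : (0 < j)%N by rewrite /j; lia.
have hitE (m : nat) : (m + d.-1 == k) = (m == j) by rewrite /j; apply/eqP/eqP; lia.
case: (ltnP Ni j) => [Nij | jNi].
  rewrite bin_small // big1 // => m _; rewrite hitE.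
  by case: eqP => [mj|]; [move: (ltn_ord m); lia | rewrite mul0rn].
rewrite (bigD1 (Ordinal (jNi : j < Ni.+1))) //= hitE eqxx natn big1 ?addr0 //.
by move=> m /andP [_]; rewrite hitE -val_eqE /= => /negPf ->; exact: mul0rn.
Qed.

Lemma clique_card_le V : is_clique d C V -> (#|V| <= N + d.-1)%N.
Proof.
move=> clV; case: (ltnP #|V| d) => [|dV]; first lia.
rewrite leqNgt; apply/negP => NV.
have : #|[set W | is_clique d C W & #|W| == #|V|]| = 0%N.
  rewrite card_cliques_of_size // big1_seq // => Ni /andP [_ NiNs].
  by rewrite bin_small //; have := mult_seq_le_max NiNs; lia.
by move/card0_eq/(_ V); rewrite inE clV eqxx.
Qed.

Lemma exists_clique_card : C != set0 ->
  exists2 V, is_clique d C V & #|V| = (N + d.-1)%N.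
Proof.
move=> C0; have Ns_neq_nil : Ns != [::].
  rewrite -size_eq0 size_mult_seq size_eq0.
  by apply: contraNneq C0 => es0; move: so; rewrite es0.
have N_in := bigmax_seq_mem Ns_neq_nil.
have N_gt0 : (0 < N)%N := allP (mult_seq_gt0 d_gt0 uC so) _ N_in.
have : (0 < #|[set V | is_clique d C V & #|V| == N + d.-1]|)%N.
  rewrite card_cliques_of_size; last by move: N_gt0; lia.
  by rewrite addnK (big_rem N N_in) /= binn.
by case/card_gt0P => V; rewrite inE => /andP [clV /eqP VN]; exists V.
Qed.

Lemma sr_dim_clique_complex : C != set0 -> sr_dim (clique_complex d C) = (N + d.-1)%N.
Proof.
move=> C0; apply/eqP; rewrite eqn_leq; apply/andP; split.
  by apply/bigmax_leqP => V; rewrite inE; apply: clique_card_le.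
have [V clV <-] := exists_clique_card C0.
by apply: (@leq_bigmax_cond _ (fun F => F \in clique_complex d C) (fun F => #|F|)); rewrite inE.
Qed.

End CliqueDimension.

Local Open Scope ring_scope.

Lemma sum_binomial_gt0 (R : comPzRingType) (x : R) N :
  \sum_(m < N.+1 | (0 < m)%N) (1 - x) ^+ (N - m) * x ^+ m *+ 'C(N, m) = 1 - (1 - x) ^+ N.
Proof.
have := exprDn (1 - x) x N; rewrite subrK expr1n (bigD1 ord0) //= subn0 mulr1 bin0 mulr1n.
rewrite (eq_bigl (fun m : 'I_N.+1 => (0 < m)%N)) => [|m]; last by rewrite lt0n.
by move=> one; rewrite [X in _ = X - _]one addrAC subrr add0r.
Qed.

Lemma expr_1sub_ex (R : comPzRingType) (y : R) s : exists q, (1 - y) ^+ s = 1 - y * q.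
Proof.
elim: s => [|s [q IH]]; first by exists 0; rewrite expr0 mulr0 subr0.
by exists (1 + q - y * q); rewrite exprS IH; ring.
Qed.

Lemma coef_exp_1subX (R : nzRingType) (m j : nat) :
  ((1 - 'X) ^+ m : {poly R})`_j = (-1) ^+ j *+ 'C(m, j).
Proof.
elim: m j => [|m IH] j.
  by rewrite expr0 coef1 bin0n; case: j.
rewrite exprS mulrBl mul1r coefB IH coefXM.
case: j => [|j] /=; first by rewrite subr0 !bin0.
by rewrite IH binS exprS mulrnDr mulN1r !mulNrn.
Qed.

Section HilbertSeries.
Variable n : nat.
Implicit Types (D : {set {set 'I_n}}).

Definition exp_support K (a : {ffun 'I_n -> 'I_K}) : {set 'I_n} :=
  [set j | (a j : nat) != 0%N].

Definition sr_hilb_bounded D K k : nat :=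
  #|[set a : {ffun 'I_n -> 'I_K.+1} |
       ((\sum_j (a j : nat)) == k)%N && (exp_support a \in D)]|.

Lemma sr_hilb_bounded_eq D k K : (k <= K)%N -> sr_hilb D k = sr_hilb_bounded D K k.
Proof.
move=> kK; have kK1 : (k.+1 <= K.+1)%N by [].
pose f (a : {ffun 'I_n -> 'I_k.+1}) : {ffun 'I_n -> 'I_K.+1} :=
  [ffun j => widen_ord kK1 (a j)].
have f_inj : injective f.
  move=> a b /ffunP eq_ab; apply/ffunP => j; move: (eq_ab j); rewrite !ffunE.
  by move/(congr1 val) => /= /val_inj.
rewrite /sr_hilb /sr_hilb_bounded -(card_imset _ f_inj); apply: eq_card => b.
rewrite [RHS]inE; apply/imsetP/idP.
  move=> [a]; rewrite inE => /andP [Ha HD] ->.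
  have -> : exp_support (f a) = [set j | (a j : nat) != 0%N].
    by apply/setP => j; rewrite !inE ffunE.
  by rewrite HD andbT; under eq_bigr do rewrite ffunE /=.
move=> /andP [Hb HD].
have bk j : (b j < k.+1)%N by rewrite ltnS -(eqP Hb) (bigD1 j) //= leq_addr.
exists [ffun j => inord (b j) : 'I_k.+1].
  rewrite inE; under eq_bigr do rewrite ffunE inordK //.
  rewrite Hb /=; congr (_ \in D): HD; apply/setP => j; rewrite !inE ffunE inordK //.
by apply/ffunP => j; rewrite !ffunE; apply/val_inj; rewrite /= inordK.
Qed.

(* The Hilbert series of K[D] with exponents bounded by K: a polynomial that
   agrees with the series in degrees <= K. *)
Definition hilb_poly D K : {poly int} :=
  \sum_(a : {ffun 'I_n -> 'I_K.+1} | exp_support a \in D) 'X^(\sum_j (a j : nat)).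

Lemma coef_hilb_poly D K k : (hilb_poly D K)`_k = (sr_hilb_bounded D K k)%:Z.
Proof.
rewrite /hilb_poly coef_sum /sr_hilb_bounded.
under eq_bigr do rewrite coefXn.
rewrite -sum1_card -natz natr_sum [LHS]big_mkcond [RHS]big_mkcond /=.
by apply: eq_bigr => a _; rewrite inE eq_sym; case: (_ \in D); case: (_ == k).
Qed.

Definition geom_poly K : {poly int} := \sum_(v < K.+1 | (v : nat) != 0%N) 'X^v.

Lemma hilb_poly_faces D K : hilb_poly D K = \sum_(F in D) geom_poly K ^+ #|F|.
Proof.
rewrite /hilb_poly (partition_big (@exp_support K.+1) (fun F => F \in D)) //=.
apply: eq_bigr => F FD.
rewrite (eq_bigl (fun a => exp_support a == F)); last first.
  by move=> a; case: eqP => [->|]; rewrite ?FD ?andbF.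
pose G j (v : 'I_K.+1) : {poly int} := if ((v : nat) != 0%N) == (j \in F) then 'X^v else 0.
have sumG j : \sum_v G j v = if j \in F then geom_poly K else 1.
  rewrite /G /geom_poly; case: (j \in F).
    by rewrite [RHS]big_mkcond; apply: eq_bigr => v _; rewrite eqb_id.
  rewrite (bigD1 ord0) //= big1 ?addr0 // => v /negPf v_neq0.
  by rewrite -val_eqE /= in v_neq0; rewrite v_neq0.
rewrite -prodr_const [RHS]big_mkcond /= (eq_bigr _ (fun j _ => esym (sumG j))).
rewrite bigA_distr_bigA /= [LHS]big_mkcond /=.
apply: eq_bigr => a _; case: eqP => [supp_a|neq].
  by rewrite -prodrXr; apply: eq_bigr => j _; rewrite /G -supp_a inE eqxx.
have /existsP [j Hj] : [exists j, (j \in exp_support a) != (j \in F)].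
  apply: contraT; rewrite negb_exists => /forallP H; case: neq; apply/setP => j.
  by apply/eqP/negPn.
by rewrite inE in Hj; rewrite (bigD1 j) //= /G (negPf Hj) mul0r.
Qed.

Lemma mul_1subX_geom_poly K : (1 - 'X) * geom_poly K = 'X * (1 - 'X^K).
Proof.
rewrite /geom_poly big_mkcond big_ord_recl /= add0r.
rewrite (eq_bigr (fun v : 'I_K => 'X * 'X^v)); last first.
  by move=> v _; rewrite /bump /= add1n exprS.
rewrite -mulr_sumr mulrCA; congr (_ * _).
have := subrXX (1 : {poly int}) 'X K; rewrite expr1n => ->; congr (_ * _).
by apply: eq_bigr => v _; rewrite expr1n mul1r.
Qed.

(* (1 - X) geom_poly (i + 1) = X (1 - X^(i+1)), and (1 - X^(i+1))^s is 1 modulo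
   X^(i+1), hence invisible in degree i. *)
Lemma coef_face_term (s delta i : nat) : (s <= delta)%N ->
  ((1 - 'X) ^+ delta * geom_poly i.+1 ^+ s)`_i =
  ('X^s * (1 - 'X) ^+ (delta - s) : {poly int})`_i.
Proof.
move=> sd; rewrite -(subnK sd) exprD -mulrA -exprMn mul_1subX_geom_poly exprMn addnK.
have [q ->] := expr_1sub_ex ('X^(i.+1) : {poly int}) s.
have -> : (1 - 'X) ^+ (delta - s) * ('X ^+ s * (1 - 'X^(i.+1) * q)) =
    'X^s * (1 - 'X) ^+ (delta - s) - 'X^(i.+1) * ((1 - 'X) ^+ (delta - s) * 'X ^+ s * q)
    :> {poly int}.
  by ring.
by rewrite coefB [X in _ - X]coefXnM ltnSn subr0.
Qed.

Lemma hvec_faces D i :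
  hvec D i = (\sum_(F in D) 'X^#|F| * (1 - 'X) ^+ (sr_dim D - #|F|) : {poly int})`_i.
Proof.
transitivity (((1 - 'X) ^+ sr_dim D * hilb_poly D i.+1)`_i).
  rewrite /hvec coefM; apply: eq_bigr => j _.
  rewrite coef_exp_1subX coef_hilb_poly -sr_hilb_bounded_eq ?leqW ?leq_subr //.
  by rewrite -mulr_natr natz.
rewrite hilb_poly_faces mulr_sumr !coef_sum; apply: eq_bigr => F FD; apply: coef_face_term.
exact: (@leq_bigmax_cond _ (fun F => F \in D) (fun F => #|F|) F FD).
Qed.
End HilbertSeries.

Section FaceSums.
Variables (n d : nat) (C : {set {set 'I_n}}) (es : seq {set 'I_n}).
Hypotheses (d_gt0 : (0 < d)%N) (uC : uniform d C) (so : simp_order d C es).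
Local Notation Ns := (mult_seq C es).
Local Notation N := (\max_(Ni <- mult_seq C es) Ni)%N.

Lemma sum_small_faces :
  \sum_(F in clique_complex d C | (#|F| < d)%N) 'X^#|F| * (1 - 'X) ^+ (N + d.-1 - #|F|) =
  \sum_(k < d) ('C(n, k))%:R *: ('X^k * (1 - 'X) ^+ (N + d - k - 1)) :> {poly int}.
Proof.
rewrite (eq_bigl (fun F : {set 'I_n} => (#|F| < d)%N)); last first.
  by move=> F; rewrite inE andbC; case: ltnP => //= Fd; rewrite is_clique_small.
rewrite (@sum_set_card_lt _ _ d (fun s => 'X^s * (1 - 'X) ^+ (N + d.-1 - s))) // card_ord.
apply: eq_bigr => k _.
by rewrite scaler_nat; congr (_ * (1 - 'X) ^+ _ *+ _); move: (ltn_ord k); lia.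
Qed.

Lemma sum_large_faces :
  \sum_(F in clique_complex d C | ~~ (#|F| < d)%N) 'X^#|F| * (1 - 'X) ^+ (N + d.-1 - #|F|) =
  'X^(d.-1) * \sum_(Ni <- Ns) ((1 - 'X) ^+ (N - Ni) - (1 - 'X) ^+ N) :> {poly int}.
Proof.
rewrite (eq_bigl (fun F : {set 'I_n} => is_clique d C F && (d <= #|F|)%N)); last first.
  by move=> F; rewrite inE -leqNgt.
rewrite (sum_cliques d_gt0 (fun s => 'X^s * (1 - 'X) ^+ (N + d.-1 - s)) uC so).
rewrite mulr_sumr big_seq [RHS]big_seq; apply: eq_bigr => Ni NiNs.
have NiN := mult_seq_le_max NiNs.
have -> : (1 - 'X) ^+ N = (1 - 'X) ^+ (N - Ni) * (1 - 'X) ^+ Ni :> {poly int}.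
  by rewrite -exprD subnK.
rewrite -{1}(mulr1 ((1 - 'X) ^+ (N - Ni))) -mulrBr -(sum_binomial_gt0 'X).
rewrite !mulr_sumr; apply: eq_bigr => m _.
have -> : (N + d.-1 - (m + d.-1) = (N - Ni) + (Ni - m))%N by move: (ltn_ord m); lia.
rewrite !mulrnAr !exprD [_ * 'X^(d.-1)]mulrC -!mulrA; congr (_ * _ *+ _).
by rewrite mulrCA [_ * 'X^m]mulrC.
Qed.

End FaceSums.

Theorem corollary2p3 (n d : nat) (C : {set {set 'I_n}}) (es : seq {set 'I_n}) :
  (0 < d)%N -> uniform d C -> C != set0 -> simp_order d C es ->
  let Ns := mult_seq C es in
  let N := (\max_(Ni <- Ns) Ni)%N in
  forall i : nat,
    hvec (clique_complex d C) i =
    (\sum_(k < d) ('C(n, k))%:R *: ('X^k * (1 - 'X) ^+ (N + d - k - 1))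
     + 'X^(d.-1) * \sum_(Ni <- Ns) ((1 - 'X) ^+ (N - Ni) - (1 - 'X) ^+ N)
      : {poly int})`_i.
Proof.
move=> d_gt0 uC C0 so Ns N i.
rewrite hvec_faces (sr_dim_clique_complex d_gt0 uC so C0).
rewrite (bigID (fun F : {set 'I_n} => (#|F| < d)%N)) /=.
by rewrite sum_small_faces // sum_large_faces.
Qed.
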